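(* For $n\ge 1$ let $A_n(x)=\sum_{\pi\in S_n}x^{\mathrm{des}(\pi)}$ be the Eulerian polynomial, and let $$C_n(x)=\sum_{\omega\in C_n}x^{\mathrm{des}(\omega)},\qquad \widetilde C_n(x)=\sum_{\omega\in C_n}x^{\mathrm{ades}(\omega)},\qquad T_n(x)=C_n(x^2)+\frac1x\,\widetilde C_n(x^2).$$ Then for every $n\ge1$, $$T_n(x)=(1+x)^{n+1}A_n(x).$$
   Context: $S_n$ is the symmetric group on $[n]$; for $\pi\in S_n$, $\mathrm{des}(\pi)=|\{i\in[n-1]:\pi(i)>\pi(i+1)\}|$. $C_n$ denotes the set of signed permutations of $\pm[n]=\{\pm1,\dots,\pm n\}$, i.e. bijections $\omega$ of $\pm[n]$ with $\omega(-i)=-\omega(i)$ for all $i$; such $\omega$ is recorded by $(\omega(1),\dots,\omega(n))$. Setting $\omega(0)=\omega(n+1)=0$, define $\mathrm{des}(\omega)=|\{i\in\{0,1,\dots,n-1\}:\omega(i)>\omega(i+1)\}|$ and $\mathrm{ades}(\omega)=|\{i\in\{0,1,\dots,n\}:\omega(i)>\omega(i+1)\}|$. *)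

From mathcomp Require Import all_boot all_order all_fingroup all_algebra.
Set Implicit Arguments. Unset Strict Implicit. Unset Printing Implicit Defensive.
Import Order.TTheory GRing.Theory Num.Theory.

(* Ordinary permutations: pi : 'S_n acts on 'I_n = {0,..,n-1}, encoding
   the permutation i+1 |-> pi(i)+1 of [n].  des counts i in [n-1],
   i.e. 0-based positions j with j+1 < n and pi(j) > pi(j+1). *)
Definition des_perm (n : nat) (p : 'S_n) : nat :=
  #|[set i : 'I_n | (i.+1 < n)%N &&
        [exists j : 'I_n, (val j == i.+1) && (p j < p i)%N]]|.

(* The set pm[n] = {+-1,...,+-n} is encoded as 'I_n * bool :
   (k, false) stands for k+1 and (k, true) for -(k+1). *)
Definition sval_of (n : nat) (a : 'I_n * bool) : int :=
  if a.2 then (- Posz a.1.+1)%R else Posz a.1.+1.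

Definition negpm (n : nat) (a : 'I_n * bool) : 'I_n * bool := (a.1, ~~ a.2).

Definition signed_perms (n : nat) : {set {perm 'I_n * bool}} :=
  [set w : {perm 'I_n * bool} | [forall a, w (negpm a) == negpm (w a)]].

(* w(i) for i in {0,...,n+1}, with w(0) = w(n+1) = 0. *)
Definition wval (n : nat) (w : {perm 'I_n * bool}) (i : nat) : int :=
  match i with
  | 0 => 0
  | k.+1 => oapp (fun j : 'I_n => sval_of (w (j, false))) 0%R (insub k)
  end.

Definition des_signed (n : nat) (w : {perm 'I_n * bool}) : nat :=
  count (fun i => wval w i.+1 < wval w i)%R (iota 0 n).

Definition ades_signed (n : nat) (w : {perm 'I_n * bool}) : nat :=
  count (fun i => wval w i.+1 < wval w i)%R (iota 0 n.+1).

(* A signed permutation is read as its word w(1) ... w(n), framed by w(0) = 0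
   (and w(n+1) = 0 for ades).  Every such word on [+-[n+1]] arises exactly once
   by inserting the letter n+1 or -(n+1) into a word on [+-[n]]; as this letter
   is larger or smaller than all others, inserting it into a descent slot keeps
   the number of descents and inserting it into an ascent slot raises it by one,
   while the result of inserting it at the end depends only on its sign.  Hence
   f_n = x T_n(x) satisfies f_(n+1) = (1 - x^2) x f_n' + 2(n+1) x^2 f_n.  The
   same insertion argument on ordinary permutations shows that
   x (1 + x)^(n+1) A_n(x) satisfies this recursion too, and both polynomials are
   x + 2x^2 + x^3 for n = 1. *)

From mathcomp Require Import all_boot all_order all_fingroup all_algebra.
From mathcomp Require Import ring.
Set Implicit Arguments. Unset Strict Implicit. Unset Printing Implicit Defensive.
Import Order.TTheory GRing.Theory Num.Theory.
Local Open Scope ring_scope.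

Fixpoint descents (s : seq int) : nat :=
  if s is a :: s' then ((if s' is b :: _ then (b < a)%R else false) + descents s')%N
  else 0%N.

Fixpoint insertions (v : int) (s : seq int) : seq (seq int) :=
  if s is a :: s' then (v :: s) :: map (cons a) (insertions v s') else [:: [:: v]].

Definition extreme (v : int) (l : seq int) :=
  all (fun y => y < v) l || all (fun y => v < y) l.

Lemma extreme_behead v a l : extreme v (a :: l) -> extreme v l.
Proof. by rewrite /extreme /= => /orP[/andP[_ ->]|/andP[_ ->]]; rewrite ?orbT. Qed.

Lemma descents_cons2 h a s :
  descents [:: h, a & s] = ((a < h)%R + descents (a :: s))%N.
Proof. by []. Qed.

Lemma descents_le_size h s : (descents (h :: s) <= size s)%N.
Proof.
elim: s h => [//|b s IH] h /=.
by case: (b < h); rewrite ?add1n ?add0n ?ltnS ?IH // (leq_trans (IH b)).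
Qed.

Lemma descents_insert_extreme v h b r :
  extreme v [:: h, b & r] -> descents [:: h, v, b & r] = (descents (b :: r)).+1.
Proof.
rewrite /extreme /= => /orP[/and3P[hv bv _]|/and3P[hv bv _]].
  by rewrite ltNge (ltW hv) bv.
by rewrite hv ltNge (ltW bv).
Qed.

Lemma descents_rcons h s v :
  descents (h :: rcons s v) = (descents (h :: s) + (v < last h s)%R)%N.
Proof.
elim: s h => [|a s IH] h; first by rewrite /= ?addn0.
by rewrite rcons_cons !descents_cons2 IH addnA.
Qed.

Lemma insertions_rcons v t c :
  insertions v (rcons t c) =
  rcons [seq rcons u c | u <- insertions v t] (rcons (rcons t c) v).
Proof. by elim: t => [//|a t IH] /=; rewrite IH map_rcons -!map_comp. Qed.

(* The word [h :: t] has [descents (h :: t)] descent slots and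
   [size t - descents (h :: t)] ascent slots before its last letter. *)
Lemma sum_descents_insertions (V : zmodType) (F : nat -> V) v h t :
  extreme v (h :: t) ->
  \sum_(u <- insertions v t) F (descents (h :: u)) =
    F (descents (h :: t)) *+ descents (h :: t)
  + F (descents (h :: t)).+1 *+ (size t - descents (h :: t))
  + F (descents (h :: t) + (v < last h t)%R)%N.
Proof.
elim: t F h => [|a t IH] F h ext_v.
  by rewrite /= big_cons big_nil addr0 /= ?addn0 ?add0n ?add0r ?addr0.
rewrite [insertions _ _]/= big_cons big_map (descents_insert_extreme ext_v).
under eq_bigr => u _ do rewrite -/(descents (a :: u)).
rewrite descents_cons2.
rewrite (IH (fun k => F ((a < h)%R + k)%N) a (extreme_behead ext_v)) [last _ _]/=.
have := descents_le_size a t.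
case: (a < h); rewrite ?add1n ?add0n => le_ds.
  by rewrite subSS mulrS !addrA.
by rewrite [size _]/= (subSn le_ds) mulrS !addrA (addrC (F _.+1)).
Qed.

Lemma sum_descents_insertions_rcons (V : zmodType) (F : nat -> V) v h t c :
  extreme v (h :: rcons t c) ->
  \sum_(u <- insertions v t) F (descents (h :: rcons u c)) =
    F (descents (h :: rcons t c)) *+ descents (h :: rcons t c)
  + F (descents (h :: rcons t c)).+1 *+ ((size t).+1 - descents (h :: rcons t c)).
Proof.
move=> /(sum_descents_insertions F); rewrite insertions_rcons -cats1 big_cat.
rewrite big_map big_seq1 descents_rcons !last_rcons size_rcons.
by move/addIr.
Qed.

Lemma uniq_flatten_map (T U : eqType) (f : T -> seq U) (g : U -> T) L :
    uniq L -> {in L, forall x, uniq (f x)} ->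
    {in L, forall x, {in f x, forall y, g y = x}} ->
  uniq (flatten (map f L)).
Proof.
elim: L => [//|a L IH] /= /andP[aL uL] uf gK.
rewrite cat_uniq uf ?mem_head // IH // => [|x xL|x xL]; last 2 first.
- by apply: uf; rewrite inE xL orbT.
- by apply: gK; rewrite inE xL orbT.
rewrite andbT; apply/hasPn => y /flattenP[_ /mapP[b bL ->] yb]; apply/negP => ya.
by move: aL; rewrite -(gK a _ y ya) ?mem_head // (gK b _ y yb) ?inE ?bL ?orbT.
Qed.

Lemma perm_insertions v s t : t \in insertions v s -> perm_eq t (v :: s).
Proof.
elim: s t => [|a s IH] t /=; first by rewrite inE => /eqP ->.
rewrite inE => /orP[/eqP -> //|/mapP[t' /IH Ht' ->]].
by apply: (@perm_trans _ (a :: v :: s)); rewrite ?perm_cons // (perm_catCA [:: a] [:: v]).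
Qed.

Lemma uniq_insertions v s : v \notin s -> uniq (insertions v s).
Proof.
elim: s => [//|a s IH] /=; rewrite inE negb_or => /andP[va vs].
have cons_inj : injective (cons a) by move=> x y [].
rewrite (map_inj_uniq cons_inj) IH // andbT.
by apply/mapP => -[t _ [e _]]; rewrite e eqxx in va.
Qed.

Lemma filter_insertions (P : pred int) v s t :
  ~~ P v -> t \in insertions v s -> filter P t = filter P s.
Proof.
move/negbTE=> Pv; elim: s t => [|a s IH] t /=; first by rewrite inE => /eqP -> /=; rewrite Pv.
by rewrite inE => /orP[/eqP -> /=|/mapP[t' /IH e ->] /=]; rewrite ?Pv ?e.
Qed.

Lemma mem_insertions_filter (f : int -> nat) y t : uniq (map f t) -> y \in t ->
  t \in insertions y (filter (fun z => f z != f y) t).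
Proof.
elim: t => [//|a t IH] /= /andP[fa ut]; rewrite inE => /orP[/eqP ->|yt].
  rewrite eqxx /=; have -> : [seq z <- t | f z != f a] = t.
    by apply/all_filterP/allP => z zt; apply: contraNneq fa => <-; apply: map_f.
  by case: t {IH fa ut} => [|b t] /=; rewrite inE eqxx.
have -> : f a != f y by apply: contraNneq fa => ->; apply: map_f.
by rewrite inE map_f ?orbT ?IH.
Qed.

Definition signed_nat (k : nat) (b : bool) : int := if b then - Posz k else Posz k.

Lemma absz_signed_nat k b : absz (signed_nat k b) = k.
Proof. by case: b; rewrite /= ?abszN. Qed.

Lemma signed_nat_lt0 k b : (signed_nat k.+1 b < 0) = b.
Proof. by case: b; rewrite /= ?oppr_lt0 // ltNge. Qed.

Lemma signed_nat_absz (y : int) : signed_nat (absz y) (y < 0) = y.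
Proof. by case: y => k //=; rewrite NegzE. Qed.

Lemma signed_nat_inj k l b c : signed_nat k.+1 b = signed_nat l.+1 c -> k = l /\ b = c.
Proof.
move=> e; have := congr1 (fun z => z < 0) e; have := congr1 absz e.
by rewrite !absz_signed_nat !signed_nat_lt0 => -[].
Qed.

Section SignedNatOrder.
Variables (n : nat) (y : int).
Hypothesis le_y_n : (absz y <= n)%N.

Lemma signed_nat_bounds : (- Posz n.+1 < y) && (y < Posz n.+1).
Proof. by rewrite -ltr_norml -abszE ltz_nat ltnS. Qed.

Lemma lt_signed_natl b : (signed_nat n.+1 b < y) = b.
Proof.
by case/andP: signed_nat_bounds; case: b => //= _ lt_y; rewrite ltNge (ltW lt_y).
Qed.

Lemma lt_signed_natr b : (y < signed_nat n.+1 b) = ~~ b.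
Proof.
by case/andP: signed_nat_bounds; case: b => //= gt_y _; rewrite ltNge (ltW gt_y).
Qed.

End SignedNatOrder.

Lemma extreme_signed_nat n b l :
  all (fun y => absz y <= n)%N l -> extreme (signed_nat n.+1 b) l.
Proof.
move=> /allP le_l; apply/orP; case: b; [right|left]; apply/allP => y /le_l le_y.
  by rewrite lt_signed_natl.
by rewrite lt_signed_natr.
Qed.

Definition signed_word (n : nat) (s : seq int) :=
  perm_eq [seq absz y | y <- s] (iota 1 n).

Lemma perm_iota1S n : perm_eq (iota 1 n.+1) (n.+1 :: iota 1 n).
Proof. by rewrite -{1}(addn1 n) iotaD add1n cats1 perm_rcons. Qed.

Section SignedWord.
Variables (n : nat) (s : seq int).
Hypothesis sw : signed_word n s.

Lemma signed_word_size : size s = n.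
Proof. by rewrite -(size_map absz) (perm_size sw) size_iota. Qed.

Lemma signed_word_uniq : uniq [seq absz y | y <- s].
Proof. by rewrite (perm_uniq sw) iota_uniq. Qed.

Lemma signed_word_absz y : y \in s -> (0 < absz y <= n)%N.
Proof. by move=> /(map_f absz); rewrite (perm_mem sw) mem_iota add1n ltnS. Qed.

Lemma signed_word_le : all (fun y => absz y <= n)%N s.
Proof. by apply/allP => y /signed_word_absz /andP[]. Qed.

Lemma signed_word_insert v t :
  absz v = n.+1 -> t \in insertions v s -> signed_word n.+1 t.
Proof.
move=> abs_v /perm_insertions/(perm_map absz) /perm_trans; apply.
by rewrite perm_sym (perm_trans (perm_iota1S n)) //= abs_v perm_cons perm_sym.
Qed.

End SignedWord.

Lemma signed_word0 s : signed_word 0 s -> s = [::].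
Proof. by move/signed_word_size/size0nil. Qed.

Lemma signed_word_remove n t :
  signed_word n.+1 t -> signed_word n [seq z <- t | absz z != n.+1].
Proof.
move=> sw; rewrite /signed_word -(filter_map absz (fun k => k != n.+1)).
apply: perm_trans (perm_filter _ sw) _.
apply: perm_trans (perm_filter _ (perm_iota1S n)) _; rewrite /= eqxx.
suff /all_filterP -> : all (fun k => k != n.+1) (iota 1 n) by [].
by apply/allP => k; rewrite mem_iota add1n => /andP[_]; apply: contraTneq => ->; rewrite ltnn.
Qed.

Lemma signed_word_max n t : signed_word n.+1 t -> exists2 y, y \in t & absz y = n.+1.
Proof.
move=> sw; have /mapP[y yt ->] : n.+1 \in [seq absz y | y <- t].
  by rewrite (perm_mem sw) mem_iota add1n ltnSn.
by exists y.
Qed.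

Fixpoint words (signs : seq bool) (n : nat) : seq (seq int) :=
  if n is n'.+1 then
    flatten [seq flatten [seq insertions (signed_nat n b) s | b <- signs]
            | s <- words signs n']
  else [:: [::]].

Lemma mem_words signs n s :
  (s \in words signs n) = signed_word n s && all (fun y => (y < 0) \in signs) s.
Proof.
elim: n s => [|n IH] t.
  by rewrite inE; apply/eqP/andP => [->|[/signed_word0 ->]].
apply/flattenP/andP => [[_ /mapP[s s_w ->] /flattenP[_ /mapP[b b_signs ->] ts]]|].
  move: s_w; rewrite IH => /andP[sw sgn_s]; split.
    exact: (signed_word_insert sw (absz_signed_nat _ _) ts).
  by rewrite (perm_all _ (perm_insertions ts)) /= signed_nat_lt0 b_signs.
case=> sw /allP sgn_t; have [y yt abs_y] := signed_word_max sw.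
set s := [seq z <- t | absz z != n.+1].
have s_w : s \in words signs n.
  by rewrite IH signed_word_remove //; apply/allP => z /[!mem_filter] /andP[_ /sgn_t].
exists (flatten [seq insertions (signed_nat n.+1 b) s | b <- signs]); first exact: map_f.
apply/flattenP; exists (insertions y s); last first.
  by rewrite /s -abs_y; apply: mem_insertions_filter (signed_word_uniq sw) yt.
by apply/mapP; exists (y < 0); rewrite ?sgn_t // -abs_y signed_nat_absz.
Qed.

Lemma uniq_words signs n : uniq signs -> uniq (words signs n).
Proof.
move=> uniq_signs; elim: n => [//|n IH] /=.
apply: (@uniq_flatten_map _ _ _ (filter (fun y => absz y <= n)%N)) => // s.
  rewrite mem_words => /andP[/signed_word_le le_s _].
  have new_s b : signed_nat n.+1 b \notin s.
    by apply/negP => /(allP le_s); rewrite absz_signed_nat ltnn.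
  apply: (@uniq_flatten_map _ _ _ (fun t : seq int => signed_nat n.+1 true \in t)) => //.
    by move=> b _; apply: uniq_insertions.
  move=> b _ t ts.
  rewrite (perm_mem (perm_insertions ts)) inE (negbTE (new_s true)) orbF.
  by apply/eqP/idP => [/signed_nat_inj[_ <-]|->].
rewrite mem_words => /andP[/signed_word_le le_s _] t.
case/flattenP=> _ /mapP[b _ ->] ts.
by rewrite (filter_insertions _ ts) ?(all_filterP le_s) //= absz_signed_nat ltnn.
Qed.

Section InsertionRecursion.
Variables (V : zmodType) (F : nat -> V) (signs : seq bool) (n : nat).

Lemma sum_words_descents :
  \sum_(s <- words signs n.+1) F (descents (0 :: s)) =
  \sum_(s <- words signs n) \sum_(b <- signs)
    (F (descents (0 :: s)) *+ descents (0 :: s)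
     + F (descents (0 :: s)).+1 *+ (n - descents (0 :: s))
     + F (if b then (descents (0 :: s)).+1 else descents (0 :: s))).
Proof.
rewrite /= big_flatten big_map; apply: eq_big_seq => s.
rewrite mem_words => /andP[sw _]; rewrite big_flatten big_map; apply: eq_bigr => b _.
have le_0s : all (fun y => absz y <= n)%N (0 :: s) by rewrite /= signed_word_le.
rewrite (sum_descents_insertions _ (extreme_signed_nat _ le_0s)) (signed_word_size sw).
rewrite lt_signed_natl; first by case: b; rewrite ?addn0 ?addn1.
by apply: (allP le_0s); apply: mem_last.
Qed.

Lemma sum_words_adescents :
  \sum_(s <- words signs n.+1) F (descents (0 :: rcons s 0)) =
  \sum_(s <- words signs n) \sum_(b <- signs)
    (F (descents (0 :: rcons s 0)) *+ descents (0 :: rcons s 0)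
     + F (descents (0 :: rcons s 0)).+1 *+ (n.+1 - descents (0 :: rcons s 0))).
Proof.
rewrite /= big_flatten big_map; apply: eq_big_seq => s.
rewrite mem_words => /andP[sw _]; rewrite big_flatten big_map; apply: eq_bigr => b _.
have le_0s0 : all (fun y => absz y <= n)%N (0 :: rcons s 0).
  by rewrite /= all_rcons /= signed_word_le.
rewrite (sum_descents_insertions_rcons _ (extreme_signed_nat _ le_0s0)).
by rewrite (signed_word_size sw).
Qed.

End InsertionRecursion.

Notation signed_words := (words [:: false; true]).
Notation positive_words := (words [:: false]).

Section InsertionOperator.
Variable R : comNzRingType.
Implicit Types (p : {poly R}) (n k : nat).

Definition insertion_op n p := (1 - 'X^2) * ('X * p^`()) + 'X^2 * p *+ (2 * n.+1).

Lemma insertion_op0 n : insertion_op n 0 = 0.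
Proof. by rewrite /insertion_op deriv0 !mulr0 mul0rn addr0. Qed.

Lemma insertion_opD n p q :
  insertion_op n (p + q) = insertion_op n p + insertion_op n q.
Proof. by rewrite /insertion_op derivD !mulrDr mulrnDl addrACA. Qed.

Lemma insertion_op_sum n I (r : seq I) (F : I -> {poly R}) :
  insertion_op n (\sum_(i <- r) F i) = \sum_(i <- r) insertion_op n (F i).
Proof. by apply: big_morph; [exact: insertion_opD | exact: insertion_op0]. Qed.

Lemma insertion_opXn n k :
  insertion_op n ('X^k) = 'X^k *+ k - 'X^(k.+2) *+ k + 'X^(k.+2) *+ (2 * n.+1).
Proof.
have mulX_derivXn : 'X * ('X^k)^`() = 'X^k *+ k :> {poly R}.
  by case: k => [|k]; rewrite derivXn ?mulr0n ?mulr0 // mulrnAr -exprS.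
by rewrite /insertion_op mulX_derivXn !exprS; ring.
Qed.

(* [xT n] is x T_n(x) and [xA n] is x (1 + x)^(n+1) A_n(x). *)
Definition xT n : {poly R} := \sum_(s <- signed_words n)
  ('X^((2 * descents (0 :: s)).+1) + 'X^(2 * descents (0 :: rcons s 0))).

Definition xA n : {poly R} := \sum_(s <- positive_words n)
  'X^((descents (0 :: s)).+1) * (1 + 'X) ^+ n.+1.

Lemma xT_rec n : xT n.+1 = insertion_op n (xT n).
Proof.
rewrite /xT big_split (sum_words_descents (fun k => 'X^((2 * k).+1)))
  (sum_words_adescents (fun k => 'X^(2 * k))) -big_split insertion_op_sum.
apply: eq_big_seq => s; rewrite mem_words => /andP[sw _].
have le_D := descents_le_size 0 s; have le_E := descents_le_size 0 (rcons s 0).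
rewrite (signed_word_size sw) in le_D; rewrite size_rcons (signed_word_size sw) in le_E.
set D := descents (0 :: s) in le_D *; set E := descents (0 :: rcons s 0) in le_E *.
rewrite !big_cons !big_nil /= insertion_opD !insertion_opXn.
rewrite (mulrnBr _ le_D) (mulrnBr _ le_E) !mulnS !addSn !add0n.
set a : {poly R} := 'X^(2 * D); set b : {poly R} := 'X^(2 * E).
rewrite !exprS -/a -/b.
ring.
Qed.

Lemma xA_rec n : xA n.+1 = insertion_op n (xA n).
Proof.
rewrite /xA (sum_words_descents (fun k => 'X^(k.+1) * (1 + 'X) ^+ n.+2)) insertion_op_sum.
apply: eq_big_seq => s; rewrite mem_words => /andP[sw _].
have le_D := descents_le_size 0 s; rewrite (signed_word_size sw) in le_D.
set D := descents (0 :: s) in le_D *.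
have deriv1X : (1 + 'X : {poly R})^`() = 1.
  by rewrite derivD derivX -polyC1 derivC add0r.
rewrite big_cons big_nil /= /insertion_op derivM !deriv_exp deriv1X derivX /=.
rewrite !exprS (mulrnBr _ le_D).
ring.
Qed.

Lemma xT_xA n : (1 <= n)%N -> xT n = xA n.
Proof.
case: n => // n _; elim: n => [|n IH]; last by rewrite xT_rec xA_rec IH.
rewrite /xT /xA /= !big_cons !big_nil /= !addn0 !addr0 muln0 muln1.
ring.
Qed.

End InsertionOperator.

Lemma mkseq_behead (u : seq int) k :
  mkseq (nth 0 u) k.+1 = nth 0 u 0 :: mkseq (nth 0 (behead u)) k.
Proof.
rewrite /mkseq -add1n iotaD /= (iotaDl 1 0) -map_comp.
by congr (_ :: _); apply: eq_map => i /=; rewrite nth_behead.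
Qed.

Lemma count_descents_mkseq (u : seq int) m :
  count (fun i => nth 0 u i.+1 < nth 0 u i) (iota 0 m) = descents (mkseq (nth 0 u) m.+1).
Proof.
elim: m u => [|m IH] u //.
rewrite (mkseq_behead _ m.+1) (mkseq_behead (behead u) m).
rewrite -[m.+1]add1n iotaD count_cat /= add0n (iotaDl 1 0) count_map.
rewrite (@eq_count _ _ (fun i => nth 0 (behead u) i.+1 < nth 0 (behead u) i)); last first.
  by move=> i /=; rewrite !nth_behead add1n.
by rewrite IH (mkseq_behead (behead u) m) /= !nth_behead addn0.
Qed.

Lemma nth_map_enum n (f : 'I_n -> int) k :
  nth 0 [seq f j | j <- enum 'I_n] k = oapp f 0 (insub k).
Proof.
case: insubP => [j kn <-|kn] /=.
  by rewrite (nth_map j) ?size_enum_ord // nth_ord_enum.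
by rewrite nth_default // size_map size_enum_ord leqNgt.
Qed.

Lemma map_nth_enum n (s : seq int) :
  size s = n -> [seq nth 0 s j | j : 'I_n <- enum 'I_n] = s.
Proof.
move=> sz; rewrite -[RHS](mkseq_nth 0) sz /mkseq -val_enum_ord -map_comp.
by apply: eq_map.
Qed.

Definition word_of_signed n (w : {perm 'I_n * bool}) : seq int :=
  [seq sval_of (w (j, false)) | j <- enum 'I_n].

Definition word_of_perm n (p : 'S_n) : seq int := [seq Posz (p j).+1 | j <- enum 'I_n].

Lemma size_word_of_signed n (w : {perm 'I_n * bool}) : size (word_of_signed w) = n.
Proof. by rewrite size_map size_enum_ord. Qed.

Lemma size_word_of_perm n (p : 'S_n) : size (word_of_perm p) = n.
Proof. by rewrite size_map size_enum_ord. Qed.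

Lemma wval_nth n (w : {perm 'I_n * bool}) i : wval w i = nth 0 (0 :: word_of_signed w) i.
Proof. by case: i => [|k] //=; rewrite nth_map_enum. Qed.

Lemma des_signedE n (w : {perm 'I_n * bool}) :
  des_signed w = descents (0 :: word_of_signed w).
Proof.
rewrite /des_signed (eq_count (a2 := fun i =>
  nth 0 (0 :: word_of_signed w) i.+1 < nth 0 (0 :: word_of_signed w) i)); last first.
  by move=> i; rewrite !wval_nth.
rewrite count_descents_mkseq.
have -> : n.+1 = size (0 :: word_of_signed w) by rewrite /= size_word_of_signed.
by rewrite mkseq_nth.
Qed.

Lemma nth_rcons_default (T : Type) (x0 : T) s i : nth x0 (rcons s x0) i = nth x0 s i.
Proof. by rewrite nth_rcons; case: ltnP => [//|le_s_i]; rewrite nth_default ?if_same. Qed.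

Lemma ades_signedE n (w : {perm 'I_n * bool}) :
  ades_signed w = descents (0 :: rcons (word_of_signed w) 0).
Proof.
set s := 0 :: rcons _ 0.
rewrite /ades_signed (eq_count (a2 := fun i => nth 0 s i.+1 < nth 0 s i)); last first.
  by move=> i; rewrite !wval_nth /s -rcons_cons !nth_rcons_default.
rewrite count_descents_mkseq.
have -> : n.+2 = size s by rewrite /s /= size_rcons size_word_of_signed.
by rewrite mkseq_nth.
Qed.

Lemma descents_cons0 s : all (fun y => 0 < y) s -> descents (0 :: s) = descents s.
Proof. by case: s => // a s /= /andP[a_pos _]; rewrite ltNge (ltW a_pos). Qed.

Lemma des_permE n (p : 'S_n) : des_perm p = descents (0 :: word_of_perm p).
Proof.
set s := word_of_perm p.
rewrite /des_perm cardsE cardE /enum_mem size_filter -enumT.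
rewrite (eq_count (a2 := preim val (fun k => (k.+1 < n)%N && (nth 0 s k.+1 < nth 0 s k))));
  last first.
  move=> i /=; rewrite unfold_in /=; case: (ltnP i.+1 n) => lt_i1 //=.
  rewrite !nth_map_enum insubT /= valK /= ltz_nat ltnS.
  apply/existsP/idP => [[j /andP[/eqP e]]|lt_p].
    by have -> : j = Ordinal lt_i1 by apply: val_inj.
  by exists (Ordinal lt_i1); rewrite /= eqxx.
rewrite -count_map val_enum_ord descents_cons0; last by apply/allP => y /mapP[j _ ->].
case: n p @s => [|n] p s; first by rewrite /s /word_of_perm enum_ord0.
rewrite -[in RHS](mkseq_nth 0 s) size_word_of_perm -count_descents_mkseq.
have -> : iota 0 n.+1 = iota 0 n ++ [:: n] by rewrite -(addn1 n) iotaD.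
rewrite count_cat /= ltnn /= !addn0.
by apply: eq_in_count => k; rewrite mem_iota /= ltnS => ->.
Qed.

Lemma perm_map_enum_succ n (g : 'I_n -> 'I_n) :
  injective g -> perm_eq [seq (g j).+1 | j <- enum 'I_n] (iota 1 n).
Proof.
move=> g_inj; have perm_g : perm_eq (map g (enum 'I_n)) (enum 'I_n).
  have [h gK hK] := injF_bij g_inj.
  apply: uniq_perm => [||x]; [by rewrite map_inj_uniq // enum_uniq | exact: enum_uniq |].
  by rewrite mem_enum; apply/mapP; exists (h x); rewrite ?mem_enum ?hK.
have -> : iota 1 n = map succn (map val (enum 'I_n)) by rewrite val_enum_ord (iotaDl 1 0).
have -> : [seq (g j).+1 | j <- enum 'I_n] = map succn (map val (map g (enum 'I_n))).
  by rewrite -!map_comp.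
exact/perm_map/perm_map.
Qed.

Lemma signed_permsP n (w : {perm 'I_n * bool}) :
  w \in signed_perms n -> forall a, w (negpm a) = negpm (w a).
Proof. by rewrite inE => /forallP sym_w a; apply/eqP. Qed.

Lemma sval_of_inj n : injective (@sval_of n).
Proof. by move=> [i b] [j c] /signed_nat_inj /= [/val_inj -> ->]. Qed.

Lemma word_of_signed_inj n : {in signed_perms n &, injective (@word_of_signed n)}.
Proof.
move=> w1 w2 w1_signed w2_signed /eq_in_map eq_w; apply/permP => -[j b].
have eq_j : w1 (j, false) = w2 (j, false).
  by apply: sval_of_inj; apply: eq_w; rewrite mem_enum.
case: b => //.
have := signed_permsP w1_signed (j, false); have := signed_permsP w2_signed (j, false).
by rewrite /negpm /= => -> ->; rewrite eq_j.
Qed.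

Lemma signed_word_of_signed n w :
  w \in signed_perms n -> signed_word n (word_of_signed w).
Proof.
move=> w_signed; rewrite /signed_word -map_comp.
rewrite (eq_map (g := fun j => ((w (j, false)).1).+1)); last first.
  by move=> j; apply: absz_signed_nat.
apply: perm_map_enum_succ => j k /=.
case Ej : (w (j, false)) => [x b]; case Ek : (w (k, false)) => [y c] /= eq_xy; subst y.
have [eq_bc | neq_bc] := eqVneq b c.
  by subst c; rewrite -Ej in Ek; case/perm_inj: Ek => ->.
have := signed_permsP w_signed (k, false); rewrite Ek /negpm /=.
have -> : ~~ c = b by case: b c neq_bc {Ej Ek} => [] [].
by rewrite -Ej => /perm_inj.
Qed.

Definition word_index n (s : seq int) (j : 'I_n.+1) : 'I_n.+1 :=
  inord (absz (nth 0 s j)).-1.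

Section WordIndex.
Variables (n : nat) (s : seq int).
Hypothesis sw : signed_word n.+1 s.

Lemma word_indexE (j : 'I_n.+1) : (word_index s j).+1 = absz (nth 0 s j).
Proof.
have j_s : (j < size s)%N by rewrite (signed_word_size sw).
have /andP[abs_gt0 abs_le] := signed_word_absz sw (mem_nth 0 j_s).
by rewrite inordK ?prednK // -ltnS prednK.
Qed.

Lemma word_index_inj : injective (@word_index n s).
Proof.
move=> j k /(congr1 (fun i : 'I_n.+1 => i.+1)); rewrite /= !word_indexE.
rewrite -!(nth_map 0 0%N absz) ?(signed_word_size sw) // => /eqP.
rewrite nth_uniq ?size_map ?(signed_word_size sw) ?(signed_word_uniq sw) //.
by move/eqP/val_inj.
Qed.

End WordIndex.

Lemma signed_word_surj n s :
  signed_word n s -> exists2 w, w \in signed_perms n & word_of_signed w = s.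
Proof.
case: n => [|n] sw.
  exists 1%g; last by rewrite (signed_word0 sw) /word_of_signed enum_ord0.
  by rewrite inE; apply/forallP => -[[]].
pose g (a : 'I_n.+1 * bool) := (word_index s a.1, a.2 (+) (nth 0 s a.1 < 0)).
have g_inj : injective g by move=> [j b] [k c] [/(word_index_inj sw) <-] /addIb ->.
exists (perm g_inj).
  by rewrite inE; apply/forallP => -[j b]; rewrite !permE /g /negpm /= addNb.
rewrite /word_of_signed -[RHS](map_nth_enum (signed_word_size sw)); apply: eq_map => j.
by rewrite permE /sval_of /= -/(signed_nat _ _) word_indexE // signed_nat_absz.
Qed.

Lemma perm_word_surj n s : signed_word n s -> all (fun y => 0 <= y) s ->
  exists p : 'S_n, word_of_perm p = s.
Proof.
case: n => [|n] sw s_ge0.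
  by exists 1%g; rewrite (signed_word0 sw) /word_of_perm enum_ord0.
exists (perm (word_index_inj sw)).
rewrite /word_of_perm -[RHS](map_nth_enum (signed_word_size sw)); apply: eq_map => j.
rewrite permE word_indexE // gez0_abs //; apply: (allP s_ge0); apply: mem_nth.
by rewrite (signed_word_size sw).
Qed.

Lemma sum_signed_perms (V : zmodType) n (G : seq int -> V) :
  \sum_(w in signed_perms n) G (word_of_signed w) = \sum_(s <- signed_words n) G s.
Proof.
suff perm_words :
    perm_eq (map (@word_of_signed n) (enum (signed_perms n))) (signed_words n).
  by rewrite -big_enum -(perm_big _ perm_words) big_map.
apply: uniq_perm; rewrite ?uniq_words //.
  rewrite map_inj_in_uniq ?enum_uniq // => w1 w2.
  by rewrite !mem_enum; apply: word_of_signed_inj.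
move=> s; rewrite mem_words (eq_all (a2 := predT)) ?all_predT ?andbT; last first.
  by move=> y; case: (y < 0).
apply/mapP/idP => [[w] | sw].
  by rewrite mem_enum => /signed_word_of_signed ? ->.
by have [w ? <-] := signed_word_surj sw; exists w; rewrite ?mem_enum.
Qed.

Lemma word_of_perm_inj n : injective (@word_of_perm n).
Proof.
move=> p1 p2 /eq_in_map eq_p; apply/permP => j.
by have [/val_inj] := eq_p j (mem_enum _ j).
Qed.

Lemma signed_word_of_perm n (p : 'S_n) : signed_word n (word_of_perm p).
Proof. by rewrite /signed_word -map_comp; apply: perm_map_enum_succ; apply: perm_inj. Qed.

Lemma sum_perms (V : zmodType) n (G : seq int -> V) :
  \sum_(p : 'S_n) G (word_of_perm p) = \sum_(s <- positive_words n) G s.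
Proof.
suff perm_words : perm_eq (map (@word_of_perm n) (enum 'S_n)) (positive_words n).
  by rewrite -(perm_big _ perm_words) big_map enumT.
apply: uniq_perm; rewrite ?uniq_words //.
  by rewrite (map_inj_uniq (@word_of_perm_inj n)); apply: enum_uniq.
move=> s; rewrite mem_words (eq_all (a2 := fun y => 0 <= y)); last first.
  by move=> y; rewrite inE eqbF_neg -leNgt.
apply/mapP/andP => [[p _ ->] | [sw s_ge0]].
  by split; [exact: signed_word_of_perm | apply/allP => y /mapP[j _ ->]].
by have [p <-] := perm_word_surj sw s_ge0; exists p; rewrite ?mem_enum.
Qed.

Lemma horner_xT (R : comNzRingType) n (x : R) :
  (xT R n).[x] = x * \sum_(w in signed_perms n) (x ^+ 2) ^+ des_signed w
                 + \sum_(w in signed_perms n) (x ^+ 2) ^+ ades_signed w.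
Proof.
rewrite mulr_sumr -big_split /=.
under eq_bigr => w _ do rewrite des_signedE ades_signedE.
rewrite (sum_signed_perms n (fun s =>
  x * (x ^+ 2) ^+ descents (0 :: s) + (x ^+ 2) ^+ descents (0 :: rcons s 0))).
rewrite /xT horner_sum; apply: eq_bigr => s _.
by rewrite hornerD !hornerXn exprS !exprM.
Qed.

Lemma horner_xA (R : comNzRingType) n (x : R) :
  (xA R n).[x] = x * (1 + x) ^+ n.+1 * \sum_(p : 'S_n) x ^+ des_perm p.
Proof.
rewrite mulr_sumr.
under eq_bigr => p _ do rewrite des_permE.
rewrite (sum_perms n (fun s => x * (1 + x) ^+ n.+1 * x ^+ descents (0 :: s))).
rewrite /xA horner_sum; apply: eq_bigr => s _.
by rewrite hornerM hornerXn horner_exp hornerD hornerC hornerX exprS mulrAC.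
Qed.

Theorem mainTheorem3 (R : realFieldType) (n : nat) (x : R) :
  (1 <= n)%N -> x != 0 ->
  (\sum_(w in signed_perms n) (x ^+ 2) ^+ des_signed w)
    + x^-1 * (\sum_(w in signed_perms n) (x ^+ 2) ^+ ades_signed w)
  = (1 + x) ^+ n.+1 * (\sum_(p : 'S_n) x ^+ des_perm p).
Proof.
move=> n_ge1 x_neq0; apply: (mulfI x_neq0).
by rewrite mulrDr mulrA divff // mul1r -horner_xT xT_xA // horner_xA mulrA.
Qed.
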